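(* Let $a>1$, $n\geq1$, $C_j(n,a)=\binom{n}{j}\left(\frac{1+a}{2}\right)^{n-j}\left(\frac{1-a}{2}\right)^j$, $w_j=-i(1-\frac{2j}{n})$, and $\sigma_n(x)=\sum_{j=0}^nC_j(n,a)A_{w_j}(x)$. Then $\sigma_n\in L^2(\mathbb{R})$ and for every $z\in\mathbb{C}$, $$F_n(z,a):=\sum_{j=0}^nC_j(n,a)e^{iz(1-\frac{2j}{n})}=\pi^{-1/4}\int_{\mathbb{R}}e^{-\frac12(z^2+x^2)+\sqrt2zx}\sigma_n(x)\,dx.$$
   Context: The Bargmann kernel is $A_w(x)=\pi^{-1/4}e^{-\frac12(\bar w^2+x^2)+\sqrt2\bar wx}$ for $w\in\mathbb{C}$, $x\in\mathbb{R}$. *)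

From HB Require Import structures.
From mathcomp Require Import all_boot all_order all_algebra.
From mathcomp Require Import all_classical all_reals all_analysis.
From mathcomp Require Import complex.
Set Implicit Arguments. Unset Strict Implicit. Unset Printing Implicit Defensive.
Import Order.TTheory GRing.Theory Num.Theory.
Import numFieldNormedType.Exports.
Local Open Scope ring_scope.
Local Open Scope complex_scope.

Section Defs.
Variable R : realType.

Definition cexp (z : R[i]) : R[i] :=
  (expR (complex.Re z))%:C * (cos (complex.Im z) +i* sin (complex.Im z)).

Definition pim14 : R := pi `^ (- (4%:R)^-1).

Definition bargmannA (w : R[i]) (x : R) : R[i] :=
  pim14%:C * cexp (- (2%:R^-1)%:C * ((w^*) ^+ 2 + (x%:C) ^+ 2)
                   + (Num.sqrt 2%:R)%:C * (w^*) * x%:C).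

Definition Cintegrable (f : R -> R[i]) : Prop :=
  (@lebesgue_measure R).-integrable setT (fun x => (complex.Re (f x))%:E) /\
  (@lebesgue_measure R).-integrable setT (fun x => (complex.Im (f x))%:E).

Definition Cintegral (f : R -> R[i]) : R[i] :=
  (Rintegral (@lebesgue_measure R) setT (fun x => complex.Re (f x)))
  +i* (Rintegral (@lebesgue_measure R) setT (fun x => complex.Im (f x))).

Definition L2C (f : R -> R[i]) : Prop :=
  measurable_fun setT (fun x => complex.Re (f x)) /\
  measurable_fun setT (fun x => complex.Im (f x)) /\
  (\int[@lebesgue_measure R]_(x in setT)
      ((complex.Re (f x)) ^+ 2 + (complex.Im (f x)) ^+ 2)%:E < +oo)%E.

Definition Cja (n : nat) (a : R) (j : nat) : R :=
  'C(n, j)%:R * ((1 + a) / 2%:R) ^+ (n - j) * ((1 - a) / 2%:R) ^+ j.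

Definition tj (n j : nat) : R := 1 - 2%:R * j%:R / n%:R.

Definition wj (n j : nat) : R[i] := - 'i * (tj n j)%:C.

Definition sigma_n (n : nat) (a : R) (x : R) : R[i] :=
  \sum_(j < n.+1) (Cja n a j)%:C * bargmannA (wj n j) x.

Definition F_n (n : nat) (z : R[i]) (a : R) : R[i] :=
  \sum_(j < n.+1) (Cja n a j)%:C * cexp ('i * z * (tj n j)%:C).

End Defs.

(* Multiplying the Bargmann weight by A_w gives pi^(-1/4) times the Gaussian
   exp(-x^2 + sqrt2 (z + conj w) x - (z^2 + conj w^2)/2), whose integral is
   sqrt(pi) exp((z + conj w)^2/2 - (z^2 + conj w^2)/2) = sqrt(pi) exp(z conj w).
   Hence pi^(-1/4) int exp(-(z^2 + x^2)/2 + sqrt2 z x) A_w(x) dx = exp(z conj w),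
   and since conj w_j = i (1 - 2j/n) the identity follows by linearity.

   The complex Gaussian integral reduces to the real one
     int exp(-x^2 + b x) cos(g x + d) dx = sqrt(pi) exp((b^2 - g^2)/4) cos(d + g b/2):
   a translation removes b, and as a function of g the integral k satisfies
   k' = -(g/2) k, which follows by differentiating under the integral sign in g
   and, at b = 0, in b.  Square integrability holds because each A_w with w
   purely imaginary is bounded by a multiple of exp(-x^2/2). *)

From HB Require Import structures.
From mathcomp Require Import all_boot all_order all_algebra.
From mathcomp Require Import all_classical all_reals all_analysis.
From mathcomp Require Import complex.
From mathcomp Require Import ring lra.
From mathcomp Require Import measurable_realfun lebesgue_integral_under.
Import Order.TTheory GRing.Theory Num.Theory.
Import numFieldNormedType.Exports.
Local Open Scope ring_scope.

Section Bargmann.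
Context {R : realType}.
Local Open Scope classical_set_scope.
Local Notation mu := (@lebesgue_measure R).
Local Notation Rintegrable f := (mu.-integrable setT (EFin \o f)).
Local Notation Rint := (Rintegral mu setT).

(** * Continuous functions on the real line and their Lebesgue integrals *)

Lemma continuous_affine (r s : R) : continuous (fun x : R => r * x + s).
Proof.
have -> : (fun x : R => r * x + s) = horner (r *: 'X + s%:P).
  by apply/funext => x; rewrite !hornerE.
exact: continuous_horner.
Qed.

Lemma continuous_quadratic (a p q : R) :
  continuous (fun x : R => a * x ^+ 2 + p * x + q).
Proof.
have -> : (fun x : R => a * x ^+ 2 + p * x + q) = horner (a *: 'X^2 + p *: 'X + q%:P).
  by apply/funext => x; rewrite !hornerE.
exact: continuous_horner.
Qed.

Lemma continuous_expR_quadratic_mul (F : R -> R) (a p q r s : R) : continuous F ->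
  continuous (fun x : R => expR (a * x ^+ 2 + p * x + q) * F (r * x + s)).
Proof.
move=> cF x.
have ce := continuous_comp (continuous_quadratic a p q x) (@continuous_expR R _).
have cl := continuous_comp (continuous_affine r s x) (cF _).
exact: continuousM ce cl.
Qed.

Lemma continuous_shift {f : R -> R} (c : R) :
  continuous f -> continuous (fun x : R => f (x + c)).
Proof.
move=> cf x; apply: (@continuous_comp _ _ _ (fun x => x + c) f); last exact: cf.
by apply: continuousD; [exact: cvg_id | exact: cvg_cst].
Qed.

Lemma continuous_sum {I : Type} (s : seq I) (F : I -> R -> R) :
  (forall i, continuous (F i)) -> continuous (fun x => \sum_(i <- s) F i x).
Proof.
move=> cF; elim: s => [|i s IH].
  by under eq_fun do rewrite big_nil; exact: cst_continuous.
under eq_fun do rewrite big_cons.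
by move=> x; exact: (continuousD (cF i x) (IH x)).
Qed.

Lemma continuousMl (k : R) {f : R -> R} :
  continuous f -> continuous (fun x => k * f x).
Proof.
by move=> cf x; exact (@continuousM R R (cst k) f x (@cst_continuous _ _ k x) (cf x)).
Qed.

Lemma RintegrableZ (k : R) {f : R -> R} :
  Rintegrable f -> Rintegrable (fun x => k * f x).
Proof.
move=> /(integrableZl measurableT k) kf.
by apply: eq_integrable kf => //= x _; rewrite EFinM.
Qed.

Lemma RintegrableD {f g : R -> R} :
  Rintegrable f -> Rintegrable g -> Rintegrable (fun x => f x + g x).
Proof.
move=> fi gi; have := integrableD measurableT fi gi.
by apply: eq_integrable => //= x _; rewrite EFinD.
Qed.

Lemma Rintegrable_le {f g : R -> R} : continuous f -> Rintegrable g ->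
  (forall x, `|f x| <= g x) -> Rintegrable f.
Proof.
move=> cf ig fg; apply: (le_integrable measurableT _ _ ig).
  by apply/measurable_EFinP; exact: continuous_measurable_fun.
by move=> x _; rewrite /= lee_fin (le_trans (fg x)) ?ler_norm.
Qed.

Lemma Rintegral_sum {I : Type} (s : seq I) (F : I -> R -> R) :
  (forall i, Rintegrable (F i)) ->
  Rintegrable (fun x => \sum_(i <- s) F i x) /\
  Rint (fun x => \sum_(i <- s) F i x) = \sum_(i <- s) Rint (F i).
Proof.
move=> iF; elim: s => [|i s [iS ES]].
  under eq_fun do rewrite big_nil.
  by rewrite big_nil Rintegral_cst // mul0r; split => //; exact: integrable0.
have -> : (fun x => \sum_(j <- i :: s) F j x) = (fun x => F i x + \sum_(j <- s) F j x).
  by apply/funext => x; rewrite big_cons.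
by rewrite big_cons -ES -RintegralD //; split => //; exact: RintegrableD.
Qed.

Lemma ge0_integral_shift {G : R -> R} (c : R) : continuous G ->
  (forall x, 0 <= G x) ->
  (\int[mu]_x (G x)%:E = \int[mu]_x (G (x + c))%:E)%E.
Proof.
move=> cG G0.
have shift' : (fun x : R => x + c)^`()%classic = cst 1.
  by apply/funext => x; rewrite derive1E deriveD // derive_id derive_cst addr0.
rewrite (@increasing_ge0_integration_by_substitutionT _ (fun x => x + c) G) //.
- by apply: eq_integral => x _; rewrite shift' /= mulr1.
- by move=> x y xy; rewrite ltrD2r.
- by rewrite shift'; exact: cst_continuous.
- by rewrite shift'; exact: is_cvg_cst.
- by rewrite shift'; exact: is_cvg_cst.
- exact: cvg_addrr_Ny.
- exact: cvg_addrr.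
Qed.

Lemma ge0_Rintegral_shift {G : R -> R} (c : R) : continuous G ->
  (forall x, 0 <= G x) -> Rintegrable G ->
  Rintegrable (fun x => G (x + c)) /\ Rint G = Rint (fun x => G (x + c)).
Proof.
move=> cG G0 /integrableP[_ Gfin].
split; last by rewrite /Rintegral (ge0_integral_shift c).
apply/integrableP; split.
  by apply/measurable_EFinP; apply: continuous_measurable_fun; exact: continuous_shift.
under eq_integral do rewrite /= ger0_norm //.
by rewrite -ge0_integral_shift //; under eq_integral do rewrite /= -[G _]ger0_norm //.
Qed.

Lemma Rintegral_shift {f : R -> R} (c : R) : continuous f -> Rintegrable f ->
  Rintegrable (fun x => f (x + c)) /\ Rint f = Rint (fun x => f (x + c)).
Proof.
move=> cf fi.
have cQ : continuous (fun x => `|f x|).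
  by move=> x; have := continuous_comp (cf x) (@norm_continuous _ _ (f x)).
have cP : continuous (fun x => f x + `|f x|).
  by move=> x; exact: (continuousD (cf x) (cQ x)).
have P0 x : 0 <= f x + `|f x| by rewrite -lerBlDr sub0r; exact: lerNnormlW.
have iQ : Rintegrable (fun x => `|f x|) by exact: integrable_norm.
have [iQc EQ] := ge0_Rintegral_shift c cQ (fun x => normr_ge0 (f x)) iQ.
have [iPc EP] := ge0_Rintegral_shift c cP P0 (RintegrableD fi iQ).
split; first exact: Rintegrable_le (continuous_shift c cf) iQc (fun x => lexx _).
have -> : f = (fun x => f x + `|f x| - `|f x|) by apply/funext => x; rewrite addrK.
rewrite !RintegralB //=; first by rewrite EP EQ.
exact: RintegrableD.
Qed.

(** * A Gaussian cosine integral *)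

Definition gauss_cos_fun (b g d x : R) := expR (- x ^+ 2 + b * x) * cos (g * x + d).

Definition gauss_cos (b g d : R) := Rint (gauss_cos_fun b g d).

Lemma Rintegral_gauss_shift (c : R) :
  Rintegrable (fun x => gauss_fun (x - c)) /\
  Rint (fun x => gauss_fun (x - c)) = Num.sqrt pi.
Proof.
have [ic <-] := ge0_Rintegral_shift (- c) (@continuous_gauss_fun R)
  (@gauss_fun_ge0 R) integrableT_gauss.
by split => //; rewrite /Rintegral integralT_gauss.
Qed.

Lemma expR_quadratic_gauss (b x : R) :
  expR (- x ^+ 2 + b * x) = expR (b ^+ 2 / 4) * gauss_fun (x - b / 2).
Proof. by rewrite /gauss_fun -expRD; congr expR; field. Qed.

Lemma continuous_gauss_cos_fun (b g d : R) : continuous (gauss_cos_fun b g d).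
Proof.
have -> : gauss_cos_fun b g d =
    (fun x => expR ((-1) * x ^+ 2 + b * x + 0) * cos (g * x + d)).
  by apply/funext => x; rewrite /gauss_cos_fun mulN1r addr0.
exact/continuous_expR_quadratic_mul/continuous_cos.
Qed.

Lemma Rintegrable_gauss_cos_fun (b g d : R) : Rintegrable (gauss_cos_fun b g d).
Proof.
have ie : Rintegrable (fun x => expR (- x ^+ 2 + b * x)).
  have := RintegrableZ (expR (b ^+ 2 / 4)) (Rintegral_gauss_shift (b / 2)).1.
  by apply: eq_integrable => // x _; rewrite /= expR_quadratic_gauss.
apply: Rintegrable_le (continuous_gauss_cos_fun b g d) ie _ => x.
by rewrite normrM ger0_norm ?expR_ge0 // ler_piMr ?expR_ge0 ?cos_max.
Qed.

Lemma gauss_cos_shift (b g d : R) :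
  gauss_cos b g d = expR (b ^+ 2 / 4) * gauss_cos 0 g (d + g * b / 2).
Proof.
rewrite /gauss_cos -RintegralZl //; last exact: Rintegrable_gauss_cos_fun.
have [_ ->] := Rintegral_shift (b / 2) (continuous_gauss_cos_fun b g d)
  (Rintegrable_gauss_cos_fun b g d).
congr Rintegral; apply/funext => x; rewrite /gauss_cos_fun mulrA -expRD.
by congr (expR _ * cos _); field.
Qed.

Lemma gauss_cos_phase (b g d : R) :
  gauss_cos b g d = cos d * gauss_cos b g 0 + sin d * gauss_cos b g (pi / 2).
Proof.
rewrite /gauss_cos -!RintegralZl -?RintegralD //;
  try exact: RintegrableZ (Rintegrable_gauss_cos_fun _ _ _).
  congr Rintegral; apply/funext => x.
  by rewrite /gauss_cos_fun cosDpihalf addr0 cosD; ring.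
all: exact: Rintegrable_gauss_cos_fun.
Qed.

Lemma gauss_cosDpi (b g d : R) : gauss_cos b g (d + pi) = - gauss_cos b g d.
Proof.
rewrite /gauss_cos -mulN1r -RintegralZl //; last exact: Rintegrable_gauss_cos_fun.
by congr Rintegral; apply/funext => x; rewrite /gauss_cos_fun addrA cosDpi; ring.
Qed.

Lemma gauss_cos00 (d : R) : gauss_cos 0 0 d = cos d * Num.sqrt pi.
Proof.
have [ig <-] := Rintegral_gauss_shift 0.
rewrite /gauss_cos -RintegralZl //; congr Rintegral; apply/funext => x.
by rewrite /gauss_cos_fun /gauss_fun !mul0r !addr0 subr0 add0r mulrC.
Qed.

Definition gauss_moment_bound (x : R) :=
  expR 1 * (gauss_fun (x - 1) + gauss_fun (x - -1)).

Lemma Rintegrable_gauss_moment_bound : Rintegrable gauss_moment_bound.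
Proof.
exact: RintegrableZ
  (RintegrableD (Rintegral_gauss_shift 1).1 (Rintegral_gauss_shift (-1)).1).
Qed.

Lemma abs_mul_gauss_cos_fun_le (b g d x : R) : `|b| <= 1 ->
  `|x * gauss_cos_fun b g d x| <= gauss_moment_bound x.
Proof.
move=> b1; rewrite !normrM (ger0_norm (expR_ge0 _)) mulrA.
apply: le_trans (ler_piMr _ (cos_max _)) _; first by rewrite mulr_ge0 ?expR_ge0.
(* |x| <= e^|x| and -x^2 + 2|x| = 1 - (|x| - 1)^2 *)
have x_le : `|x| <= expR `|x| by apply: le_trans (expR_ge1Dx _); rewrite lerDr.
apply: le_trans (ler_wpM2r (expR_ge0 _) x_le) _; rewrite -expRD.
have bx : b * x <= `|x|.
  by rewrite (le_trans (ler_norm _)) // normrM ler_piMl.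
rewrite /gauss_moment_bound /gauss_fun mulrDr -!expRD.
have [x0|x0] := leP 0 x.
- apply: ler_wpDr; first exact: expR_ge0.
  by rewrite ler_expR; rewrite ger0_norm // in bx *; nra.
- apply: ler_wpDl; first exact: expR_ge0.
  by rewrite ler_expR; rewrite ltr0_norm // in bx *; nra.
Qed.

Lemma is_derive_Rintegral (f df : R -> R -> R) (G : R -> R) (u v t : R) :
  u < t < v ->
  (forall s, u < s < v -> Rintegrable (f s)) ->
  (forall s x, u < s < v -> is_derive s 1 (f ^~ x) (df s x)) ->
  Rintegrable G -> (forall s x, u < s < v -> `|df s x| <= G x) ->
  is_derive t 1 (fun s => Rint (f s)) (Rint (df t)).
Proof.
move=> ut intf dfd iG Gub.
have G0 x : 0 <= G x by exact: le_trans (normr_ge0 _) (Gub _ x ut).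
have It : `]u, v[%classic t by rewrite /= in_itv.
have intf' s : `]u, v[%classic s -> Rintegrable (f s).
  by rewrite /= in_itv => /intf.
have derf s x : `]u, v[%classic s -> setT x -> derivable (f ^~ x) s 1.
  by rewrite /= in_itv => /(dfd _ x) [].
have Gub' s x : `]u, v[%classic s -> setT x -> `|partial1of2 f s x| <= G x.
  rewrite /= in_itv => us _.
  by rewrite /partial1of2 derive1E; case: (dfd _ x us) => _ ->; exact: Gub.
have der := derivable_under_integral measurableT It intf' derf G0 iG Gub'.
have val := differentiation_under_integral measurableT It intf' derf G0 iG Gub'.
apply: DeriveDef => //; rewrite -derive1E val; congr Rintegral; apply/funext => x.
by rewrite /partial1of2 derive1E; case: (dfd _ x ut) => _ ->.
Qed.

Lemma is_derive_expR_sqr_div4 (t : R) :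
  is_derive t 1 (fun b : R => expR (b ^+ 2 / 4)) (expR (t ^+ 2 / 4) * (t / 2)).
Proof.
have q : is_derive t 1 (fun b : R => b ^+ 2 / 4) (t / 2).
  apply: is_derive_eq; rewrite !scaler0 add0r.
  by rewrite -[_ *: (_ + _)]/(_ * _) -[t%:A]/(t * 1); field.
exact: is_derive1_comp (is_derive_expR _) q.
Qed.

Lemma is_derive_affine_comp {F F' : R -> R} (k a c t : R) :
  (forall y : R, is_derive y 1 F (F' y)) ->
  is_derive t 1 (fun s => k * F (s * a + c)) (k * (F' (t * a + c) * a)).
Proof.
move=> dF.
have e : is_derive t 1 (fun s : R => s * a + c) a.
  by apply: is_derive_eq; rewrite scaler0 add0r addr0; exact: mulr1.
exact: is_deriveZ (is_derive1_comp (dF _) e).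
Qed.

Lemma is_derive_gauss_cos_fun_b (b g d x : R) :
  is_derive b 1 (fun b => gauss_cos_fun b g d x) (x * gauss_cos_fun b g d x).
Proof.
rewrite /gauss_cos_fun.
have e : is_derive b 1 (fun b : R => - x ^+ 2 + b * x) x.
  by apply: is_derive_eq; rewrite add0r mul1r scaler0 add0r; exact: mulr1.
apply: is_derive_eq (is_deriveM (is_derive1_comp (is_derive_expR _) e)
  (is_derive_cst (cos (g * x + d)) b 1)) _.
by rewrite scaler0 add0r /= -[_ *: _]/(_ * _); ring.
Qed.

Lemma is_derive_gauss_cos_fun_g (b g d x : R) :
  is_derive g 1 (fun g => gauss_cos_fun b g d x)
    (x * gauss_cos_fun b g (d + pi / 2) x).
Proof.
rewrite /gauss_cos_fun addrA cosDpihalf.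
have e : is_derive g 1 (fun g : R => g * x + d) x.
  by apply: is_derive_eq; rewrite scaler0 add0r addr0; exact: mulr1.
apply: is_derive_eq (is_deriveM (is_derive_cst (expR (- x ^+ 2 + b * x)) g 1)
  (is_derive1_comp (is_derive_cos _) e)) _.
by rewrite scaler0 addr0 /= -[_ *: _]/(_ * _); ring.
Qed.

Lemma is_derive_gauss_cos_b (g d : R) :
  is_derive (0 : R) 1 (fun b => gauss_cos b g d)
    (Rint (fun x => x * gauss_cos_fun 0 g d x)).
Proof.
rewrite /gauss_cos; apply: (is_derive_Rintegral _
  (fun b x => x * gauss_cos_fun b g d x) gauss_moment_bound (-1) 1).
- by rewrite ltrN10 ltr01.
- by move=> s _; exact: Rintegrable_gauss_cos_fun.
- by move=> s x _; exact: is_derive_gauss_cos_fun_b.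
- exact: Rintegrable_gauss_moment_bound.
- move=> s x /andP[s1 s2]; apply: abs_mul_gauss_cos_fun_le.
  by rewrite ler_norml !ltW.
Qed.

Lemma is_derive_gauss_cos_g (t d : R) :
  is_derive t 1 (fun g => gauss_cos 0 g d)
    (Rint (fun x => x * gauss_cos_fun 0 t (d + pi / 2) x)).
Proof.
rewrite /gauss_cos; apply: (is_derive_Rintegral _
  (fun g x => x * gauss_cos_fun 0 g (d + pi / 2) x) gauss_moment_bound
  (t - 1) (t + 1)).
- by apply/andP; split; lra.
- by move=> s _; exact: Rintegrable_gauss_cos_fun.
- by move=> s x _; exact: is_derive_gauss_cos_fun_g.
- exact: Rintegrable_gauss_moment_bound.
- by move=> s x _; apply: abs_mul_gauss_cos_fun_le; rewrite normr0 ler01.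
Qed.

Lemma Rintegral_mul_gauss_cos (g d : R) :
  Rint (fun x => x * gauss_cos_fun 0 g d x) = g / 2 * gauss_cos 0 g (d + pi / 2).
Proof.
(* Compare with the derivative at b = 0 of the explicit dependence on b given
   by [gauss_cos_shift] and [gauss_cos_phase]. *)
have [_ <-] := is_derive_gauss_cos_b g d.
pose K0 := gauss_cos 0 g 0; pose K1 := gauss_cos 0 g (pi / 2).
have -> : (fun b => gauss_cos b g d) = (fun b : R => expR (b ^+ 2 / 4)) *
    ((fun b => K0 * cos (b * (g / 2) + d)) + (fun b => K1 * sin (b * (g / 2) + d))).
  apply/funext => b; rewrite gauss_cos_shift gauss_cos_phase !fctE.
  have -> : d + g * b / 2 = b * (g / 2) + d by ring.
  by rewrite /K0 /K1; ring.
have dC := is_derive_affine_comp K0 (g / 2) d 0 (@is_derive_cos R).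
have dS := is_derive_affine_comp K1 (g / 2) d 0 (@is_derive_sin R).
have [_ ->] := is_deriveM (is_derive_expR_sqr_div4 0) (is_deriveD dC dS).
rewrite [in RHS]gauss_cos_phase cosDpihalf sinDpihalf -/K0 -/K1.
rewrite !mul0r !add0r mulr0 scaler0 addr0 expr0n /= mul0r expR0 scale1r; ring.
Qed.

Lemma is_derive_gauss_cos0 (t d : R) :
  is_derive t 1 (fun g => gauss_cos 0 g d) (- (t / 2) * gauss_cos 0 t d).
Proof.
apply: is_derive_eq (is_derive_gauss_cos_g t d) _.
by rewrite Rintegral_mul_gauss_cos -addrA -splitr gauss_cosDpi; ring.
Qed.

Lemma gauss_cos0E (g d : R) :
  gauss_cos 0 g d = Num.sqrt pi * expR (- (g ^+ 2 / 4)) * cos d.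
Proof.
have D (x : R) :
    is_derive x 1 ((fun b : R => expR (b ^+ 2 / 4)) * (fun g => gauss_cos 0 g d)) 0.
  apply: is_derive_eq
    (is_deriveM (is_derive_expR_sqr_div4 x) (is_derive_gauss_cos0 x d)) _.
  by rewrite -[_ *: _]/(_ * _) -[X in _ + X]/(_ * _); ring.
have := is_derive_0_is_cst g 0 D.
rewrite !fctE gauss_cos00 expr0n /= mul0r expR0 mul1r => E.
rewrite -[LHS](mulKf (lt0r_neq0 (expR_gt0 (g ^+ 2 / 4)))) E expRN; ring.
Qed.

Lemma gauss_cosE (b g d : R) : gauss_cos b g d =
  Num.sqrt pi * expR ((b ^+ 2 - g ^+ 2) / 4) * cos (d + g * b / 2).
Proof. by rewrite gauss_cos_shift gauss_cos0E mulrBl expRD; ring. Qed.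

(** * Complex Gaussian integrals *)

Local Open Scope complex_scope.
(* Unqualified [Re] and [Im] would denote the real and imaginary parts of a
   [numClosedFieldType]. *)
Local Notation Re := complex.Re.
Local Notation Im := complex.Im.

Lemma complex_ext (u v : R[i]) : Re u = Re v -> Im u = Im v -> u = v.
Proof. by case: u v => [? ?] [? ?] /= -> ->. Qed.

Lemma Re_sum {I : Type} (s : seq I) (F : I -> R[i]) :
  Re (\sum_(i <- s) F i) = \sum_(i <- s) Re (F i).
Proof.
elim: s => [|i s IH]; first by rewrite !big_nil.
by rewrite !big_cons -IH; case: (F i) => ? ?; case: (\sum_(j <- s) F j).
Qed.

Lemma Im_sum {I : Type} (s : seq I) (F : I -> R[i]) :
  Im (\sum_(i <- s) F i) = \sum_(i <- s) Im (F i).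
Proof.
elim: s => [|i s IH]; first by rewrite !big_nil.
by rewrite !big_cons -IH; case: (F i) => ? ?; case: (\sum_(j <- s) F j).
Qed.

Lemma Re_realM (r : R) (u : R[i]) : Re (r%:C * u) = r * Re u.
Proof. by case: u => a b /=; rewrite mul0r subr0. Qed.

Lemma Im_realM (r : R) (u : R[i]) : Im (r%:C * u) = r * Im u.
Proof. by case: u => a b /=; rewrite mul0r addr0. Qed.

Lemma Re_sum_realM {I : Type} (s : seq I) (c : I -> R) (F : I -> R[i]) :
  Re (\sum_(i <- s) (c i)%:C * F i) = \sum_(i <- s) c i * Re (F i).
Proof. by rewrite Re_sum; apply: eq_bigr => i _; rewrite Re_realM. Qed.

Lemma Im_sum_realM {I : Type} (s : seq I) (c : I -> R) (F : I -> R[i]) :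
  Im (\sum_(i <- s) (c i)%:C * F i) = \sum_(i <- s) c i * Im (F i).
Proof. by rewrite Im_sum; apply: eq_bigr => i _; rewrite Im_realM. Qed.

Lemma Re_cexp (u : R[i]) : Re (cexp u) = expR (Re u) * cos (Im u).
Proof. by rewrite /cexp /= mul0r subr0. Qed.

Lemma Im_cexp (u : R[i]) : Im (cexp u) = expR (Re u) * sin (Im u).
Proof. by rewrite /cexp /= mul0r addr0. Qed.

Lemma cexpD (u v : R[i]) : cexp (u + v) = cexp u * cexp v.
Proof.
rewrite /cexp; case: u => a b; case: v => c d /=.
by apply: complex_ext => /=; rewrite expRD cosD sinD; ring.
Qed.

Lemma Re_cexp_quadratic (a : R) (b e : R[i]) (x : R) :
  Re (cexp (a%:C * x%:C ^+ 2 + b * x%:C + e)) =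
  expR (a * x ^+ 2 + Re b * x + Re e) * cos (Im b * x + Im e).
Proof.
by rewrite Re_cexp; case: b e => ? ? [? ?] /=; congr (expR _ * cos _); ring.
Qed.

Lemma Im_cexp_quadratic (a : R) (b e : R[i]) (x : R) :
  Im (cexp (a%:C * x%:C ^+ 2 + b * x%:C + e)) =
  expR (a * x ^+ 2 + Re b * x + Re e) * sin (Im b * x + Im e).
Proof.
by rewrite Im_cexp; case: b e => ? ? [? ?] /=; congr (expR _ * sin _); ring.
Qed.

Lemma CintegrableP (f : R -> R[i]) :
  Rintegrable (fun x => Re (f x)) -> Rintegrable (fun x => Im (f x)) ->
  Cintegrable f.
Proof. by []. Qed.

Lemma Cintegral_gauss (b e : R[i]) :
  Cintegrable (fun x => cexp (- x%:C ^+ 2 + b * x%:C + e)) /\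
  Cintegral (fun x => cexp (- x%:C ^+ 2 + b * x%:C + e)) =
    (Num.sqrt pi)%:C * cexp (b ^+ 2 * (4^-1)%:C + e).
Proof.
case: b e => b1 b2 [e1 e2].
have ReE :
    (fun x => Re (cexp (- x%:C ^+ 2 + (b1 +i* b2) * x%:C + (e1 +i* e2)))) =
    (fun x => expR e1 * gauss_cos_fun b1 b2 e2 x).
  apply/funext => x; rewrite Re_cexp /gauss_cos_fun /= mulrA -expRD.
  by congr (expR _ * cos _); ring.
have ImE :
    (fun x => Im (cexp (- x%:C ^+ 2 + (b1 +i* b2) * x%:C + (e1 +i* e2)))) =
    (fun x => expR e1 * gauss_cos_fun b1 b2 (e2 - pi / 2) x).
  apply/funext => x; rewrite Im_cexp /gauss_cos_fun /= mulrA -expRD.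
  by rewrite (addrA (b2 * x)) cosBpihalf; congr (expR _ * sin _); ring.
split.
  by apply: CintegrableP; rewrite ?ReE ?ImE;
    exact: RintegrableZ (Rintegrable_gauss_cos_fun _ _ _).
rewrite /Cintegral ReE ImE !RintegralZl //; try exact: Rintegrable_gauss_cos_fun.
rewrite -!/(gauss_cos _ _ _) !gauss_cosE.
have Ere : (b1 * b1 - b2 * b2) / 4 - (b1 * b2 + b2 * b1) * 0 = (b1 ^+ 2 - b2 ^+ 2) / 4.
  by ring.
have Eim : (b1 * b1 - b2 * b2) * 0 + (b1 * b2 + b2 * b1) / 4 + e2 = e2 + b2 * b1 / 2.
  by field.
apply: complex_ext;
  rewrite [LHS]/= ?Re_realM ?Im_realM ?Re_cexp ?Im_cexp /= expRD Ere Eim.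
  by ring.
by rewrite addrAC cosBpihalf; ring.
Qed.

Lemma Cintegral_sum {I : Type} (s : seq I) (c : I -> R) (f : I -> R -> R[i]) :
  (forall i, Cintegrable (f i)) ->
  Cintegrable (fun x => \sum_(i <- s) (c i)%:C * f i x) /\
  Cintegral (fun x => \sum_(i <- s) (c i)%:C * f i x) =
    \sum_(i <- s) (c i)%:C * Cintegral (f i).
Proof.
move=> fi.
have ReE : (fun x => Re (\sum_(i <- s) (c i)%:C * f i x)) =
    (fun x => \sum_(i <- s) c i * Re (f i x)).
  by apply/funext => x; exact: Re_sum_realM.
have ImE : (fun x => Im (\sum_(i <- s) (c i)%:C * f i x)) =
    (fun x => \sum_(i <- s) c i * Im (f i x)).
  by apply/funext => x; exact: Im_sum_realM.
have [iRe ERe] := Rintegral_sum s (fun i x => c i * Re (f i x))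
  (fun i => RintegrableZ (c i) (fi i).1).
have [iIm EIm] := Rintegral_sum s (fun i x => c i * Im (f i x))
  (fun i => RintegrableZ (c i) (fi i).2).
split; first by apply: CintegrableP; rewrite ?ReE ?ImE.
rewrite /Cintegral ReE ImE ERe EIm; apply: complex_ext.
- rewrite [LHS]/= Re_sum; apply: eq_bigr => i _.
  by rewrite Re_realM RintegralZl //; exact: (fi i).1.
- rewrite [LHS]/= Im_sum; apply: eq_bigr => i _.
  by rewrite Im_realM RintegralZl //; exact: (fi i).2.
Qed.

(** * The Bargmann transform of the kernels [A_w] *)

Definition bargmann_weight (z : R[i]) (x : R) : R[i] :=
  cexp (- (2%:R^-1)%:C * (z ^+ 2 + x%:C ^+ 2) + (Num.sqrt 2%:R)%:C * z * x%:C).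

Lemma pim14_sqr_mul_sqrt_pi : pim14 R * pim14 R * Num.sqrt pi = 1.
Proof.
rewrite /pim14 -powRD; last by rewrite (gt_eqF (pi_gt0 _)) implybT.
rewrite (_ : - 4%:R^-1 + - 4%:R^-1 = - 2^-1 :> R); last by field.
by rewrite powRN powR12_sqrt ?pi_ge0 // mulVf // gt_eqF // sqrtr_gt0 pi_gt0.
Qed.

Lemma bargmann_weight_mul (z w : R[i]) (x : R) :
  bargmann_weight z x * bargmannA w x = (pim14 R)%:C *
    cexp (- x%:C ^+ 2 + (Num.sqrt 2%:R)%:C * (z + w^*) * x%:C +
          - (2%:R^-1)%:C * (z ^+ 2 + w^* ^+ 2)).
Proof.
have half : (2%:R^-1 : R)%:C + (2%:R^-1)%:C = 1 :> R[i].
  by apply: complex_ext => /=; [field | rewrite addr0].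
rewrite /bargmann_weight /bargmannA mulrCA -cexpD; congr (_ * cexp _).
by rewrite -[in RHS](mul1r (x%:C ^+ 2)) -half; ring.
Qed.

Lemma bargmann_exponentE (z c : R[i]) :
  ((Num.sqrt 2%:R)%:C * (z + c)) ^+ 2 * (4^-1 : R)%:C +
    - (2%:R^-1)%:C * (z ^+ 2 + c ^+ 2) = z * c.
Proof.
have s2 : ((Num.sqrt 2%:R : R)%:C) ^+ 2 = 2%:R :> R[i].
  by rewrite -rmorphXn /= sqr_sqrtr ?ler0n // rmorph_nat.
by rewrite exprMn s2 !fmorphV !rmorph_nat; field; rewrite ?pnatr_eq0.
Qed.

Lemma bargmann_transform_sum {I : Type} (s : seq I) (c : I -> R)
    (w : I -> R[i]) (z : R[i]) :
  let f x := bargmann_weight z x * \sum_(i <- s) (c i)%:C * bargmannA (w i) x in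
  Cintegrable f /\
  (pim14 R)%:C * Cintegral f = \sum_(i <- s) (c i)%:C * cexp (z * (w i)^*).
Proof.
move=> f.
pose g i x := cexp (- x%:C ^+ 2 + (Num.sqrt 2%:R)%:C * (z + (w i)^*) * x%:C +
                    - (2%:R^-1)%:C * (z ^+ 2 + (w i)^* ^+ 2)).
have -> : f = (fun x => \sum_(i <- s) (c i * pim14 R)%:C * g i x).
  apply/funext => x; rewrite /f mulr_sumr; apply: eq_bigr => i _.
  by rewrite mulrCA bargmann_weight_mul rmorphM mulrA.
have [ig ->] := Cintegral_sum s (fun i => c i * pim14 R) g
  (fun i => (Cintegral_gauss _ _).1).
split => //; rewrite mulr_sumr; apply: eq_bigr => i _.
rewrite (Cintegral_gauss _ _).2 bargmann_exponentE.
by rewrite -[in RHS](mulr1 (c i)) -pim14_sqr_mul_sqrt_pi !rmorphM; ring.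
Qed.

Lemma bargmannAE (w : R[i]) (x : R) : bargmannA w x = (pim14 R)%:C *
  cexp ((- 2%:R^-1 : R)%:C * x%:C ^+ 2 + (Num.sqrt 2%:R)%:C * w^* * x%:C +
        - (2%:R^-1)%:C * w^* ^+ 2).
Proof. by rewrite /bargmannA; congr (_ * cexp _); rewrite rmorphN /=; ring. Qed.

Lemma continuous_bargmannA (w : R[i]) :
  continuous (fun x => Re (bargmannA w x)) /\
  continuous (fun x => Im (bargmannA w x)).
Proof.
split.
  under eq_fun do rewrite bargmannAE Re_realM Re_cexp_quadratic.
  exact/continuousMl/continuous_expR_quadratic_mul/continuous_cos.
under eq_fun do rewrite bargmannAE Im_realM Im_cexp_quadratic.
exact/continuousMl/continuous_expR_quadratic_mul/continuous_sin.
Qed.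

Lemma abs_bargmannA_le (w : R[i]) (x : R) : Re w = 0 ->
  let k := pim14 R * expR (Re (- (2%:R^-1)%:C * w^* ^+ 2)) in
  `|Re (bargmannA w x)| <= k * expR (- 2^-1 * x ^+ 2) /\
  `|Im (bargmannA w x)| <= k * expR (- 2^-1 * x ^+ 2).
Proof.
move=> w_im.
have Rb : Re ((Num.sqrt 2%:R)%:C * w^*) = 0.
  by rewrite Re_realM; case: w w_im => a b /= ->; rewrite mulr0.
have pim0 : 0 <= pim14 R by exact: powR_ge0.
move=> k; rewrite bargmannAE Re_realM Im_realM Re_cexp_quadratic Im_cexp_quadratic.
rewrite Rb mul0r addr0 expRD !normrM (ger0_norm pim0) !(ger0_norm (expR_ge0 _)).
have key (A B t : R) : 0 <= A -> 0 <= B -> `|t| <= 1 ->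
    pim14 R * (A * B * `|t|) <= pim14 R * B * A.
  move=> A0 B0 t1; rewrite -(mulrA (pim14 R) B A); apply: ler_wpM2l => //.
  by rewrite [B * A]mulrC ler_piMr ?mulr_ge0.
by split; apply: key; rewrite ?expR_ge0 ?cos_max ?sin_max.
Qed.

Lemma sqr_sum_le {I : Type} (s : seq I) (c F k : I -> R) (e : R) :
  (forall i, `|F i| <= k i * e) ->
  (\sum_(i <- s) c i * F i) ^+ 2 <= (\sum_(i <- s) `|c i| * k i * e) ^+ 2.
Proof.
move=> Fle.
have : `|\sum_(i <- s) c i * F i| <= \sum_(i <- s) `|c i| * k i * e.
  apply: le_trans (ler_norm_sum _ _ _) _; apply: ler_sum => i _.
  by rewrite normrM -mulrA; apply: ler_wpM2l.
by rewrite ler_norml => /andP[? ?]; nra.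
Qed.

Lemma L2C_sum_bargmannA {I : Type} (s : seq I) (c : I -> R) (w : I -> R[i]) :
  (forall i, Re (w i) = 0) ->
  L2C (fun x => \sum_(i <- s) (c i)%:C * bargmannA (w i) x).
Proof.
move=> w_im.
pose k i := pim14 R * expR (Re (- (2%:R^-1)%:C * (w i)^* ^+ 2)).
pose M := \sum_(i <- s) `|c i| * k i.
have sqr_le (F : I -> R -> R) x :
    (forall i, `|F i x| <= k i * expR (- 2^-1 * x ^+ 2)) ->
    (\sum_(i <- s) c i * F i x) ^+ 2 <= M ^+ 2 * gauss_fun x.
  have -> : M ^+ 2 * gauss_fun x = (M * expR (- 2^-1 * x ^+ 2)) ^+ 2.
    rewrite exprMn [expR _ ^+ 2]expr2 -expRD /gauss_fun.
    by congr (_ * expR _); field.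
  by rewrite /M mulr_suml; exact: sqr_sum_le.
have cRe : continuous (fun x => Re (\sum_(i <- s) (c i)%:C * bargmannA (w i) x)).
  under eq_fun do rewrite Re_sum_realM.
  by apply: continuous_sum => i; exact: continuousMl (continuous_bargmannA _).1.
have cIm : continuous (fun x => Im (\sum_(i <- s) (c i)%:C * bargmannA (w i) x)).
  under eq_fun do rewrite Im_sum_realM.
  by apply: continuous_sum => i; exact: continuousMl (continuous_bargmannA _).2.
have mRe := continuous_measurable_fun cRe; have mIm := continuous_measurable_fun cIm.
split; first exact: mRe.
split; first exact: mIm.
have iB : Rintegrable (fun x => 2 * M ^+ 2 * gauss_fun x).
  exact: RintegrableZ integrableT_gauss.
apply: le_lt_trans (integrable_lty measurableT iB).
apply: ge0_le_integral => //.
- by move=> x _; rewrite lee_fin addr_ge0 ?sqr_ge0.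
- by apply/measurable_EFinP/measurable_funD; exact: measurable_funX.
- apply/measurable_EFinP; apply: continuous_measurable_fun.
  exact: continuousMl continuous_gauss_fun.
- move=> x _; rewrite lee_fin Re_sum_realM Im_sum_realM.
  have := sqr_le (fun i x => Re (bargmannA (w i) x)) x
    (fun i => (abs_bargmannA_le (w i) x (w_im i)).1).
  have := sqr_le (fun i x => Im (bargmannA (w i) x)) x
    (fun i => (abs_bargmannA_le (w i) x (w_im i)).2).
  lra.
Qed.

Lemma mul_conj_wj (z : R[i]) (n j : nat) :
  z * (wj R n j)^* = 'i * z * (tj R n j)%:C.
Proof. by case: z => p q; apply: complex_ext; rewrite /wj /=; ring. Qed.

End Bargmann.

Local Open Scope complex_scope.

Theorem corollary4p4 (R : realType) (a : R) (n : nat) :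
  1 < a -> (1 <= n)%N ->
  L2C (sigma_n n a) /\
  forall z : R[i],
    let g := fun x : R =>
      cexp (- (2%:R^-1)%:C * (z ^+ 2 + (x%:C) ^+ 2) + (Num.sqrt 2%:R)%:C * z * x%:C)
      * sigma_n n a x in
    Cintegrable g /\ F_n n z a = (pim14 R)%:C * Cintegral g.
Proof.
(* The identity holds for every [a] and [n] (for [n = 0], [2j/n] is [0]). *)
move=> _ _; split.
  by apply: L2C_sum_bargmannA => j; rewrite /wj /=; ring.
move=> z g.
have [ig E] := bargmann_transform_sum (index_enum 'I_n.+1) (Cja n a) (wj R n) z.
split; first exact: ig.
have -> : (pim14 R)%:C * Cintegral g = _ := E.
by apply: eq_bigr => j _; rewrite mul_conj_wj.
Qed.
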